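(* Let $\phi$ be an instance of MonLinNAE3SAT, and let $\mathcal{G}$ be the lifetime-1 temporal graph constructed from $\phi$, with sources $s$ and $s'$. If $\phi$ is satisfiable in the not-all-equal sense, then the minimum value of a solution of \textsc{ReachFast} on $\mathcal{G}$ with sources $\{s,s'\}$ equals $6$.
   Context: MonLinNAE3SAT instance: a CNF formula $\phi$ on variables $x_1,\dots,x_n$ with clauses $c_1,\dots,c_m$. Every clause has exactly three distinct literals, every variable appears exactly four times, there are no negations, and any two clauses share at most one variable. The formula is NAE-satisfiable if some truth assignment makes, in every clause, at least one literal true and at least one literal false. Construction of $\mathcal{G}$. All edges have the single label $1$ (lifetime $1$). The vertices and edges are as follows. - Sources $s,s'$. - For each clause $c_j$: vertices $a_j,a'_j,z_j,z'_j$ and edges $sa_j$, $s'a'_j$, $a_jz_j$, $a'_jz'_j$. - For each variable $x_i$: vertices $b_i,b'_i,w_i$ and edges $b_iw_i$, $w_ib'_i$. - If $x_i$ appears in $c_j$: edges $a_jb_i$ and $a'_jb'_i$. - If $x_i$ and $x_k$ appear in a common clause: edges $b_ib_k$, $b'_ib'_k$, $w_iw_k$. - A ladder on vertices $p_1,\dots,p_5,q_1,\dots,q_5$ with edges $sp_1$, $sq_1$, $s'p_5$, $s'q_5$, $p_ip_{i+1}$ and $q_iq_{i+1}$ for $i\in[4]$, and $p_iq_i$ for $i\in[5]$. Temporal graph notions. A temporal graph has edge sets $E_1,\dots,E_{t_{\max}}$, and an edge has label $i$ if it lies in $E_i$. A temporal path uses edges with strictly increasing labels; its arrival time is its last label.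 $\mathrm{reachtime}(v,\cdot)$ is the least $t$ such that $v$ reaches every vertex by time $t$. Delaying a label $i$ by a positive integer $\delta$ replaces it by $i+\delta$. A solution for sources $S$ is a temporal graph obtained by delaying labels in which every source reaches every vertex; its value is $\max_{v\in S}\mathrm{reachtime}(v,\cdot)$. *)

From mathcomp Require Import all_boot.
Set Implicit Arguments. Unset Strict Implicit. Unset Printing Implicit Defensive.

(* A formula on variables x_0..x_{n-1} with clauses c_0..c_{m-1};
   clause j consists of the three (monotone) literals cl j 0, cl j 1, cl j 2. *)

Definition occurs n m (cl : 'I_m -> 'I_3 -> 'I_n) (i : 'I_n) (j : 'I_m) : bool :=
  [exists k, cl j k == i].

Definition is_MonLinNAE3SAT n m (cl : 'I_m -> 'I_3 -> 'I_n) : Prop :=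
  (forall j, injective (cl j)) /\
  (forall i, #|[set p : 'I_m * 'I_3 | cl p.1 p.2 == i]| = 4) /\
  (forall j j', j != j' -> #|[set i | occurs cl i j && occurs cl i j']| <= 1).

Definition NAE_satisfiable n m (cl : 'I_m -> 'I_3 -> 'I_n) : Prop :=
  exists a : 'I_n -> bool,
    forall j, (exists k, a (cl j k)) /\ (exists k, ~~ a (cl j k)).

Inductive vertex (n m : nat) : Type :=
| vs | vs'
| va of 'I_m | va' of 'I_m | vz of 'I_m | vz' of 'I_m
| vb of 'I_n | vb' of 'I_n | vw of 'I_n
| vp of 'I_5 | vq of 'I_5.

Arguments vs {n m}. Arguments vs' {n m}.

Definition edge0 n m (cl : 'I_m -> 'I_3 -> 'I_n) (x y : vertex n m) : Prop :=
  match x, y with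
  | vs, va j => True
  | vs', va' j => True
  | va j, vz j' => j = j'
  | va' j, vz' j' => j = j'
  | vb i, vw i' => i = i'
  | vw i, vb' i' => i = i'
  | va j, vb i => occurs cl i j
  | va' j, vb' i => occurs cl i j
  | vb i, vb k => i <> k /\ exists j, occurs cl i j && occurs cl k j
  | vb' i, vb' k => i <> k /\ exists j, occurs cl i j && occurs cl k j
  | vw i, vw k => i <> k /\ exists j, occurs cl i j && occurs cl k j
  (* ladder p_1..p_5, q_1..q_5 (indices shifted to 0..4) *)
  | vs, vp k => val k = 0
  | vs, vq k => val k = 0
  | vs', vp k => val k = 4
  | vs', vq k => val k = 4
  | vp k, vp k' => val k' = (val k).+1
  | vq k, vq k' => val k' = (val k).+1
  | vp k, vq k' => k = k'
  | _, _ => False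
  end.

Definition adjG n m (cl : 'I_m -> 'I_3 -> 'I_n) (x y : vertex n m) : Prop :=
  edge0 cl x y \/ edge0 cl y x.

(* A lifetime-1 temporal graph on vertex type V: adjacency relation adj, and
   each edge {x,y} carries the single label lab x y (lab symmetric). *)

Fixpoint tw (V : Type) (adj : V -> V -> Prop) (lab : V -> V -> nat)
    (x : V) (prev : nat) (p : seq V) (t : nat) : Prop :=
  match p with
  | [::] => True
  | y :: p' => adj x y /\ prev < lab x y /\ lab x y <= t /\ tw adj lab y (lab x y) p' t
  end.

(* u reaches w by time t via a temporal path (the trivial path has arrival 0) *)
Definition reaches_by (V : Type) (adj : V -> V -> Prop) (lab : V -> V -> nat)
    (u w : V) (t : nat) : Prop :=
  exists p : seq V, tw adj lab u 0 p t /\ last u p = w.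

Definition reaches_all_by V adj (lab : V -> V -> nat) (v : V) t : Prop :=
  forall w, reaches_by adj lab v w t.

Definition is_reachtime V adj (lab : V -> V -> nat) (v : V) (t : nat) : Prop :=
  reaches_all_by adj lab v t /\ forall t', reaches_all_by adj lab v t' -> t <= t'.

(* Delaying: starting from all labels equal to 1, edge {x,y} is delayed by
   d x y >= 0 (0 = not delayed); d must be symmetric (one delay per edge). *)
Definition delayed_label V (d : V -> V -> nat) (x y : V) : nat := 1 + d x y.

Definition valid_delay V (d : V -> V -> nat) : Prop := forall x y, d x y = d y x.

Definition is_solution V adj (S : V -> Prop) (d : V -> V -> nat) : Prop :=
  valid_delay d /\
  forall v, S v -> forall w, exists t, reaches_by adj (delayed_label d) v w t.

Definition solution_value V adj (S : V -> Prop) (d : V -> V -> nat) (k : nat) : Prop :=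
  (forall v, S v -> exists t, is_reachtime adj (delayed_label d) v t /\ t <= k) /\
  (exists v, S v /\ is_reachtime adj (delayed_label d) v k).

Definition reachfast_min V adj (S : V -> Prop) (k : nat) : Prop :=
  (exists d, is_solution adj S d /\ solution_value adj S d k) /\
  (forall d k', is_solution adj S d -> solution_value adj S d k' -> k <= k').

Definition sources_ss' n m (v : vertex n m) : Prop := v = vs \/ v = vs'.

From mathcomp Require Import all_boot zify.

(* Since all labels are at least 1 and strictly increase along a temporal
   path, the arrival time of a path is at least its length; s and s' are at
   distance 6 (witnessed by the potential [height], which drops by at most 1
   per edge), so every solution has value at least 6.
   Conversely, a NAE assignment a yields explicit delays under which s reaches
   every vertex by time 6: b_i, w_i, b'_i are reached at times 2, 3, 4 when
   a(x_i) is true, and the variables that are false in a clause borrow the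
   b' and w arrivals of a true variable of a common clause, which exists
   because the assignment is not-all-equal.  The involution exchanging s with
   s' and primed with unprimed vertices (reversing the ladder) maps these
   delays to those of the negated assignment, which is again NAE, so s'
   reaches every vertex by time 6 as well. *)

Set Implicit Arguments.
Unset Strict Implicit.
Unset Printing Implicit Defensive.

Arguments va {n m}. Arguments va' {n m}. Arguments vz {n m}. Arguments vz' {n m}.
Arguments vb {n m}. Arguments vb' {n m}. Arguments vw {n m}.
Arguments vp {n m}. Arguments vq {n m}.

Section TemporalWalks.
Variables (V : Type) (adj : V -> V -> Prop).

Lemma tw_potential (lab : V -> V -> nat) (F : V -> nat) :
  (forall x y, adj x y -> F x <= F y + 1) ->
  forall p x y prev t, tw adj lab x prev (y :: p) t ->
  prev + F x <= t + F (last y p).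
Proof.
move=> F_adj; elim=> [|z p IH] x y prev t /= [xy [prev_lt [lab_le walk]]].
  by have := F_adj _ _ xy; lia.
have := IH _ _ _ _ walk; have := F_adj _ _ xy; lia.
Qed.

Lemma reaches_by_potential (lab : V -> V -> nat) (F : V -> nat) u w t :
  (forall x y, adj x y -> F x <= F y + 1) -> F w = 0 -> u <> w ->
  reaches_by adj lab u w t -> F u <= t.
Proof.
move=> F_adj Fw uw [[|y p] [walk /= last_p]]; first by case: uw.
by have := tw_potential F_adj walk; rewrite last_p Fw; lia.
Qed.

Lemma reaches_by_map (f : V -> V) (lab1 lab2 : V -> V -> nat) u w t :
  (forall x y, adj x y -> adj (f x) (f y)) ->
  (forall x y, lab2 (f x) (f y) = lab1 x y) ->
  reaches_by adj lab1 u w t -> reaches_by adj lab2 (f u) (f w) t.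
Proof.
move=> f_adj f_lab [p [walk <-]]; exists (map f p); rewrite last_map; split=> //.
elim: p u 0 walk => [|y p IH] x prev //= [xy [prev_lt [lab_le walk]]].
by rewrite f_lab; split; [exact: f_adj | split=> //; split=> //; exact: IH].
Qed.

End TemporalWalks.

Section Gadgets.
Variables n m : nat.
Local Notation V := (vertex n m).

Definition mirror (x : V) : V :=
  match x with
  | vs => vs' | vs' => vs
  | va j => va' j | va' j => va j
  | vz j => vz' j | vz' j => vz j
  | vb i => vb' i | vb' i => vb i | vw i => vw i
  | vp k => vq (rev_ord k) | vq k => vp (rev_ord k)
  end.

Lemma mirrorK : involutive mirror.
Proof. by case=> //= k; rewrite rev_ordK. Qed.

Definition height (x : V) : nat :=
  match x with
  | vs => 6 | vs' => 0 | va _ => 5 | va' _ => 1 | vz _ => 6 | vz' _ => 2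
  | vb _ => 4 | vb' _ => 2 | vw _ => 3 | vp k => 5 - k | vq k => 5 - k
  end.

Definition rung_delay (k : nat) : nat := nth 0 [:: 5; 4; 3; 4; 5] k.

(* Each edge gets its delay on one orientation only; [nae_delay] symmetrizes. *)
Definition arc_delay (a : 'I_n -> bool) (x y : V) : nat :=
  match x, y with
  | va _, vz _ | va' _, vz' _ => 5
  | va _, vb i => if a i then 1 else 4
  | va' _, vb' i => if a i then 4 else 1
  | vb i, vw _ => if a i then 2 else 3
  | vw _, vb' i => if a i then 3 else 2
  | vb _, vb _ | vb' _, vb' _ => 4
  | vw _, vw _ => 3
  | vs', vp _ | vs, vq _ => 5
  | vp k, vp k' => if val k' == k.+1 then k.+1 else 0
  | vq k, vq k' => if val k' == k.+1 then 4 - k else 0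
  | vp k, vq k' => if val k == k' then rung_delay k else 0
  | _, _ => 0
  end.

Definition nae_delay a (x y : V) : nat := maxn (arc_delay a x y) (arc_delay a y x).

Lemma nae_delay_valid a : valid_delay (nae_delay a).
Proof. by move=> x y; rewrite /nae_delay maxnC. Qed.

Lemma nae_delay_mirror a x y :
  nae_delay (negb \o a) x y = nae_delay a (mirror x) (mirror y).
Proof.
case: x; case: y => *; rewrite /nae_delay /= ?maxn0 ?max0n //;
  repeat match goal with |- context [a ?i] => case: (a i) end => //;
  repeat match goal with k : 'I_5 |- _ => case: k => [[|[|[|[|[|?]]]]] ?] // end.
Qed.

End Gadgets.

Section Construction.
Variables (n m : nat) (cl : 'I_m -> 'I_3 -> 'I_n).
Local Notation V := (vertex n m).
Local Notation adj := (adjG cl).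

Ltac ord5_bounds :=
  repeat match goal with k : 'I_5 |- _ =>
    lazymatch goal with _ : is_true (nat_of_ord k < 5) |- _ => fail
    | _ => pose proof (ltn_ord k) end end.

Lemma adjG_mirror x y : adj x y -> adj (mirror x) (mirror y).
Proof.
rewrite /adjG; case: x; case: y => //= *; try tauto;
  repeat match goal with H : _ \/ _ |- _ => case: H => H end;
  try discriminate; try tauto; try (subst; tauto); ord5_bounds; lia.
Qed.

Lemma height_adj x y : adj x y -> height x <= height y + 1.
Proof.
rewrite /adjG; case: x; case: y => //= *;
  repeat match goal with H : _ \/ _ |- _ => case: H => H end;
  try discriminate; try tauto; try (subst; lia); ord5_bounds; lia.
Qed.

Lemma reaches_mirror_source_ge6 lab (v : V) t :
  sources_ss' v -> reaches_by adj lab v (mirror v) t -> 6 <= t.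
Proof.
case=> -> reach; first exact: reaches_by_potential height_adj _ _ reach.
have height_mirror_adj x y : adj x y -> height (mirror x) <= height (mirror y) + 1.
  by move=> /adjG_mirror; apply: height_adj.
exact: reaches_by_potential height_mirror_adj _ _ reach.
Qed.

Lemma reaches_all_source_ge6 lab (v : V) t :
  sources_ss' v -> reaches_all_by adj lab v t -> 6 <= t.
Proof. by move=> Sv /(_ (mirror v)); apply: reaches_mirror_source_ge6. Qed.

Definition nae_assignment (a : 'I_n -> bool) : Prop :=
  forall j, (exists k, a (cl j k)) /\ (exists k, ~~ a (cl j k)).

Lemma nae_assignment_negb a : nae_assignment a -> nae_assignment (negb \o a).
Proof.
move=> nae j; case: (nae j) => -[k1 ak1] [k2 ak2].
by split; [exists k2 | exists k1; rewrite /= negbK].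
Qed.

Lemma occurs_cl j k : occurs cl (cl j k) j.
Proof. by apply/existsP; exists k. Qed.

Lemma MonLinNAE3SAT_occurs : is_MonLinNAE3SAT cl -> forall i, exists j, occurs cl i j.
Proof.
move=> [_ [four _]] i.
have : 0 < #|[set p : 'I_m * 'I_3 | cl p.1 p.2 == i]| by rewrite four.
by case/card_gt0P => -[j k]; rewrite inE => /eqP <-; exists j; apply: occurs_cl.
Qed.

Section ReachFromS.
Variable a : 'I_n -> bool.
Hypothesis occ : forall i, exists j, occurs cl i j.
Hypothesis nae : nae_assignment a.

Local Notation reach_s w := (reaches_by adj (delayed_label (nae_delay a)) vs w 6).
Local Notation P k := (vp (@Ordinal 5 k isT)).

Ltac edge := rewrite /adjG /=; first [left; solve [auto] | right; solve [auto]].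

Ltac walk_ok :=
  split; last done;
  rewrite /= /delayed_label /nae_delay /=;
  repeat match goal with H : a _ = _ |- _ => rewrite H /= end;
  repeat split; try edge.

Lemma nae_partner i : ~~ a i -> exists j i', [/\ occurs cl i j, occurs cl i' j & a i'].
Proof.
move=> ai; case: (occ i) => j ij; case: (nae j) => -[k ak] _.
by exists j, (cl j k); split=> //; apply: occurs_cl.
Qed.

Lemma reach_s_ladder :
  [/\ reach_s vs', forall k, reach_s (vp k) & forall k, reach_s (vq k)].
Proof.
split.
- by exists [:: P 0; P 1; P 2; P 3; P 4; vs']; walk_ok.
- case=> [[|[|[|[|[|k]]]]] lt_k5] //.
  + by exists [:: vp (Ordinal lt_k5)]; walk_ok.
  + by exists [:: P 0; vp (Ordinal lt_k5)]; walk_ok.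
  + by exists [:: P 0; P 1; vp (Ordinal lt_k5)]; walk_ok.
  + by exists [:: P 0; P 1; P 2; vp (Ordinal lt_k5)]; walk_ok.
  + by exists [:: P 0; P 1; P 2; P 3; vp (Ordinal lt_k5)]; walk_ok.
- case=> [[|[|[|[|[|k]]]]] lt_k5] //.
  + by exists [:: vq (Ordinal lt_k5)]; walk_ok.
  + by exists [:: P 0; vp (Ordinal lt_k5); vq (Ordinal lt_k5)]; walk_ok.
  + by exists [:: P 0; P 1; vp (Ordinal lt_k5); vq (Ordinal lt_k5)]; walk_ok.
  + by exists [:: P 0; P 1; P 2; vp (Ordinal lt_k5); vq (Ordinal lt_k5)]; walk_ok.
  + by exists [:: P 0; P 1; P 2; P 3; vp (Ordinal lt_k5); vq (Ordinal lt_k5)]; walk_ok.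
Qed.

Lemma reach_s_clause j :
  [/\ reach_s (va j), reach_s (vz j), reach_s (va' j) & reach_s (vz' j)].
Proof.
case: (nae j) => -[k ak] _; set i := cl j k.
have {}ak : a i = true by [].
have ij : occurs cl i j := occurs_cl j k.
split.
- by exists [:: va j]; walk_ok.
- by exists [:: va j; vz j]; walk_ok.
- by exists [:: va j; vb i; vw i; vb' i; va' j]; walk_ok.
- by exists [:: va j; vb i; vw i; vb' i; va' j; vz' j]; walk_ok.
Qed.

Lemma reach_s_variable i : [/\ reach_s (vb i), reach_s (vw i) & reach_s (vb' i)].
Proof.
case: (occ i) => j ij; case ai: (a i).
  split.
  - by exists [:: va j; vb i]; walk_ok.
  - by exists [:: va j; vb i; vw i]; walk_ok.
  - by exists [:: va j; vb i; vw i; vb' i]; walk_ok.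
have [j' [i' [ij' i'j' ai']]] := nae_partner (negbT ai).
have {}ai' : a i' = true by [].
have shared : i' <> i /\ exists j, occurs cl i' j && occurs cl i j.
  by split; [move=> ii'; rewrite ii' ai in ai' | exists j'; rewrite ij' i'j'].
split.
- by exists [:: va j; vb i]; walk_ok.
- by exists [:: va j'; vb i'; vw i'; vw i]; walk_ok.
- by exists [:: va j'; vb i'; vw i'; vb' i'; vb' i]; walk_ok.
Qed.

Lemma reach_s_all w : reach_s w.
Proof.
have [reach_s' reach_p reach_q] := reach_s_ladder.
case: w => // [|j|j|j|j|i|i|i]; first by exists [::].
all: by [case: (reach_s_clause j) | case: (reach_s_variable i)].
Qed.

End ReachFromS.

Lemma nae_delay_reachtime a :
  (forall i, exists j, occurs cl i j) -> nae_assignment a ->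
  forall v : V, sources_ss' v -> is_reachtime adj (delayed_label (nae_delay a)) v 6.
Proof.
move=> occ nae v Sv; split; last by move=> t; apply: reaches_all_source_ge6.
case: Sv => -> w; first exact: reach_s_all.
rewrite -[w]mirrorK -[vs']/(mirror vs).
apply: reaches_by_map (reach_s_all occ (nae_assignment_negb nae) (mirror w)).
  exact: adjG_mirror.
by move=> x y; rewrite /delayed_label nae_delay_mirror.
Qed.

End Construction.

Theorem lemma1 (n m : nat) (cl : 'I_m -> 'I_3 -> 'I_n) :
  is_MonLinNAE3SAT cl ->
  NAE_satisfiable cl ->
  reachfast_min (adjG cl) (@sources_ss' n m) 6.
Proof.
move=> inst [a nae].
have reachtime := nae_delay_reachtime (MonLinNAE3SAT_occurs inst) nae.
split.
- exists (nae_delay a); split.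
    split; first exact: nae_delay_valid.
    by move=> v /reachtime [reach _] w; exists 6.
  split; first by move=> v /reachtime; exists 6.
  by exists vs; split; [left | apply: reachtime; left].
- by move=> d k _ [_ [v [Sv [reach _]]]]; apply: reaches_all_source_ge6 Sv reach.
Qed.
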